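(* Let $\alpha\ge4$, let $N_2=\{i_1,\dots,i_v\}$ be a finite set with reals $y'_i\in[\frac{\alpha-1}{\alpha},1)$ and weights $w_i\ge0$ ordered so that $w_{i_1}\le w_{i_2}\le\dots\le w_{i_v}$, and suppose $Y:=\sum_{i\in N_2}y'_i\le v-1$. Run the procedure below producing $\hat y$. Then: (i) the procedure terminates at some $r>1$; (ii) every $\hat y_i$ ($i\in N_2$) satisfies $\hat y_i=1$ or $\frac{\alpha-2}{\alpha}<\hat y_i\le\frac{\alpha-1}{\alpha}$, and $\hat y_i=\frac{\alpha-1}{\alpha}$ or $\hat y_i=1$ for every $i\ne i_1$ (so at most one $i$ has $\frac{\alpha-2}{\alpha}<\hat y_i<\frac{\alpha-1}{\alpha}$); (iii) $\sum_{i\in N_2}\hat y_i=\sum_{i\in N_2}y'_i$; (iv) $\sum_{i\in N_2}(1-\hat y_i)w_i\le\sum_{i\in N_2}(1-y'_i)w_i$.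
   Context: Procedure: initially set $\hat y_i=\frac{\alpha-1}{\alpha}$ for all $i\in N_2$ and $Y'=Y-\sum_{i\in N_2}\hat y_i$. For $r=v,v-1,\dots,1$: if $Y'=0$, terminate; if $Y'>0$ and $Y'+\hat y_{i_r}<1$, set $\hat y_{i_1}\leftarrow\hat y_{i_1}-(1-Y'-\hat y_{i_r})$ and $\hat y_{i_r}\leftarrow1$, and terminate; if $Y'>0$ and $Y'+\hat y_{i_r}\ge1$, set $\hat y_{i_r}\leftarrow1$ and update $Y'\leftarrow Y-\sum_{i\in N_2}\hat y_i$. (In the paper $w_i=d'_ic_{s(i)i}$, but the statement holds for arbitrary nonnegative weights.) *)

From HB Require Import structures.
From mathcomp Require Import all_boot all_order all_algebra.
Set Implicit Arguments. Unset Strict Implicit. Unset Printing Implicit Defensive.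
Import Order.TTheory GRing.Theory Num.Theory.
Local Open Scope ring_scope.

(* N_2 = {i_1,...,i_v} is relabelled as the naturals 1..v, with i_r := r.
   Functions on N_2 are functions nat -> R (only values on 1..v matter). *)

Definition setf (R : Type) (f : nat -> R) (j : nat) (x : R) : nat -> R :=
  fun i => if i == j then x else f i.

Definition sumN2 (R : numFieldType) (v : nat) (f : nat -> R) : R :=
  \sum_(1 <= i < v.+1) f i.

(* Returns the current yhat together with
   [Some r] if the procedure terminated at step r, or [None] if the loop ran out
   without terminating (or hit the unspecified case Y' < 0). *)
Fixpoint proc_loop (R : numFieldType) (Y : R) (v k : nat) (yh : nat -> R)
  : (nat -> R) * option nat :=
  match k with
  | 0 => (yh, None)
  | k'.+1 =>
    let Y' := Y - sumN2 v yh in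
    if Y' == 0 then (yh, Some k)
    else if 0 < Y' then
      if Y' + yh k < 1 then
        (setf (setf yh 1 (yh 1%N - (1 - Y' - yh k))) k 1, Some k)
      else proc_loop Y v k' (setf yh k 1)
    else (yh, None)
  end.

Definition procedure (R : numFieldType) (alpha : R) (v : nat) (y' : nat -> R)
  : (nat -> R) * option nat :=
  proc_loop (sumN2 v y') v v (fun _ => (alpha - 1) / alpha).

(* Write c := (alpha - 1)/alpha.  Starting from the constant vector c, the loop
   raises coordinates v, v-1, ... to 1 one at a time; while it runs, the slack
   Y' = Y - sum yhat stays in [0, k (1 - c) - 1] at step k, since every y'_i is
   at least c and Y <= v - 1.  Hence the loop stops at some k >= 2, either with
   Y' = 0 or after putting the remaining slack on coordinate 1, which then lies
   in (2c - 1, c].  The output has the same sum as y', lies below y' on the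
   coordinates up to the stopping index m and equals 1 >= y' beyond it, so the
   exchange inequality for the nondecreasing weights w gives (iv). *)
From HB Require Import structures.
From mathcomp Require Import all_boot all_order all_algebra.
From mathcomp Require Import ring lra zify.
Set Implicit Arguments. Unset Strict Implicit. Unset Printing Implicit Defensive.
Import Order.TTheory GRing.Theory Num.Theory.
Local Open Scope ring_scope.

Lemma sumN2_setf (R : numFieldType) v (f : nat -> R) j x :
  (1 <= j <= v)%N -> sumN2 v (setf f j x) = sumN2 v f + (x - f j).
Proof.
move=> hj; rewrite /sumN2.
have hjv : j \in index_iota 1 v.+1 by rewrite mem_index_iota ltnS.
rewrite (bigD1_seq j) ?iota_uniq //= [in RHS](bigD1_seq j) ?iota_uniq //=.
rewrite {1}/setf eqxx (eq_bigr f); last by move=> i /negbTE hij; rewrite /setf hij.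
ring.
Qed.

Lemma sumN2_const (R : numFieldType) v (x : R) : sumN2 v (fun=> x) = v%:R * x.
Proof. by rewrite /sumN2 sumr_const_nat subSS subn0 mulr_natl. Qed.

Lemma sumN2_sub (R : numFieldType) v (f g : nat -> R) :
  sumN2 v (fun i => f i - g i) = sumN2 v f - sumN2 v g.
Proof. exact: sumrB. Qed.

(* Exchange argument: each term [d i * w i] is at most [d i * w m]. *)
Lemma sumN2_exchange_le (R : realFieldType) v m (d w : nat -> R) :
  (1 <= m <= v)%N -> sumN2 v d = 0 ->
  (forall i, (1 <= i <= m)%N -> 0 <= d i) ->
  (forall i, (m < i <= v)%N -> d i <= 0) ->
  (forall i j, (1 <= i)%N -> (i <= j)%N -> (j <= v)%N -> w i <= w j) ->
  sumN2 v (fun i => d i * w i) <= 0.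
Proof.
move=> /andP[hm1 hmv] hd0 hdpos hdneg hw.
have -> : 0 = sumN2 v (fun i => d i * w m).
  by rewrite /sumN2 -mulr_suml -/(sumN2 v d) hd0 mul0r.
apply: ler_sum_nat => i /andP[hi1 hiv]; rewrite ltnS in hiv.
have [him|hmi] := leqP i m.
  by apply: ler_wpM2l; [apply: hdpos; lia | apply: hw].
by apply: ler_wnM2l; [apply: hdneg; lia | apply: hw; lia].
Qed.

Lemma sumN2_weighted_deficit_le (R : realFieldType) v m (y z w : nat -> R) :
  (1 <= m <= v)%N -> sumN2 v z = sumN2 v y ->
  (forall i, (1 <= i <= m)%N -> z i <= y i) ->
  (forall i, (m < i <= v)%N -> y i <= z i) ->
  (forall i j, (1 <= i)%N -> (i <= j)%N -> (j <= v)%N -> w i <= w j) ->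
  sumN2 v (fun i => (1 - z i) * w i) <= sumN2 v (fun i => (1 - y i) * w i).
Proof.
move=> hm hzy hle hge hw.
have -> : sumN2 v (fun i => (1 - z i) * w i) =
          sumN2 v (fun i => (1 - y i) * w i) + sumN2 v (fun i => (y i - z i) * w i).
  by rewrite -big_split; apply: eq_bigr => i _ /=; ring.
rewrite gerDl; apply: (sumN2_exchange_le hm) => //.
- by rewrite sumN2_sub hzy subrr.
- by move=> i /hle; rewrite subr_ge0.
- by move=> i /hge; rewrite subr_le0.
Qed.

Lemma gt1_of_mul_slack (R : realFieldType) (c : R) k :
  0 < c -> 1 <= k%:R * (1 - c) -> (1 < k)%N.
Proof.
move=> hc hk; rewrite ltnNge; apply/negP => hk1.
have : k%:R <= 1 :> R by rewrite -[1]/(1%:R) ler_nat.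
have : 0 <= k%:R :> R by [].
nra.
Qed.

Definition two_level {R : numFieldType} v m (c : R) (z : nat -> R) : Prop :=
  forall i, (1 <= i <= v)%N ->
    ((i <= m)%N -> 2 * c - 1 < z i <= c /\ ((2 <= i)%N -> z i = c)) /\
    ((m < i)%N -> z i = 1).

Section Loop.

Variables (R : realFieldType) (c Y : R) (v : nat).

Definition stair k (yh : nat -> R) : Prop :=
  forall i, (1 <= i <= v)%N -> yh i = if (k < i)%N then 1 else c.

Lemma two_level_stair k yh : c < 1 -> stair k yh -> two_level v k c yh.
Proof.
move=> c_lt1 hyh i hi; rewrite hyh //; split=> [hik|->//].
by rewrite ltnNge hik /=; split=> //; apply/andP; split; lra.
Qed.

Lemma stair_raise k yh : (k.+1 <= v)%N -> stair k.+1 yh -> stair k (setf yh k.+1 1).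
Proof.
move=> hkv hyh i hi; rewrite /setf; case: eqP => [->|hik]; first by rewrite ltnSn.
by rewrite hyh //; case: (ltngtP k.+1 i) => h //; lia.
Qed.

Lemma two_level_spill k yh D : c < 1 ->
  (1 < k.+1 <= v)%N -> stair k.+1 yh -> 0 < D -> D + c < 1 ->
  two_level v k c (setf (setf yh 1 (yh 1%N - (1 - D - c))) k.+1 1).
Proof.
move=> c_lt1 hk hyh hD hDc i hi; rewrite /setf.
have hy1 : yh 1%N = c by rewrite hyh //; lia.
split=> [hik|hik].
  have -> : (i == k.+1) = false by apply/eqP; lia.
  case: eqP => [->|hi1]; first by rewrite hy1; split=> [|//]; apply/andP; split; lra.
  rewrite hyh //; have -> : (k.+1 < i)%N = false by lia.
  by split=> //; apply/andP; split; lra.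
case: eqP => // hik1; have -> : (i == 1%N) = false by apply/eqP; lia.
by rewrite hyh //; have -> : (k.+1 < i)%N by lia.
Qed.

Lemma sumN2_spill k yh D :
  (1 < k.+1 <= v)%N -> stair k.+1 yh -> D = Y - sumN2 v yh ->
  sumN2 v (setf (setf yh 1 (yh 1%N - (1 - D - c))) k.+1 1) = Y.
Proof.
move=> hk hyh ->; have hy1 : yh 1%N = c by rewrite hyh //; lia.
have hyk : yh k.+1 = c by rewrite hyh ?ltnn //; lia.
rewrite !sumN2_setf; try lia.
by rewrite /setf (_ : (k.+1 == 1%N) = false) ?hy1 ?hyk; [ring | apply/eqP; lia].
Qed.

Lemma proc_loop_stair k yh : 0 < c -> c < 1 ->
  (k <= v)%N -> stair k yh ->
  0 <= Y - sumN2 v yh -> 1 <= k%:R * (1 - c) - (Y - sumN2 v yh) ->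
  exists r m, (proc_loop Y v k yh).2 = Some r /\ (1 < r)%N /\ (1 <= m <= v)%N /\
    sumN2 v (proc_loop Y v k yh).1 = Y /\ two_level v m c (proc_loop Y v k yh).1.
Proof.
move=> c_gt0 c_lt1; elim: k yh => [|k IH] yh hkv hyh hD0 hD1.
  by rewrite mul0r in hD1; lra.
have hk1 : (1 < k.+1)%N by apply: (gt1_of_mul_slack c_gt0); lra.
have hyk : yh k.+1 = c by rewrite hyh ?ltnn //; lia.
rewrite /= hyk; set D := Y - sumN2 v yh.
have [/eqP hD|hD] := eqVneq D 0.
  exists k.+1, k.+1; do 2!split=> //; split; first lia.
  by split; [rewrite /D in hD; lra | exact: two_level_stair].
have hDpos : 0 < D by rewrite lt_def hD.
rewrite hDpos; case: ifP => hDc.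
  exists k.+1, k; do 2!split=> //; split; first lia.
  split; first by apply: sumN2_spill => //; lia.
  by apply: two_level_spill => //; lia.
move/negbT: hDc; rewrite -leNgt => hDc.
apply: IH; [lia | exact: stair_raise | |];
  rewrite sumN2_setf ?hyk; try lia.
- by rewrite /D in hDc; lra.
- by rewrite /D -[k.+1]addn1 natrD in hD1 *; lra.
Qed.

End Loop.

Lemma proc_loop_const (R : realFieldType) (c : R) v (y : nat -> R) :
  0 < c -> c < 1 -> (forall i, (1 <= i <= v)%N -> c <= y i) ->
  sumN2 v y <= v%:R - 1 ->
  let out := proc_loop (sumN2 v y) v v (fun=> c) in
  exists r m, out.2 = Some r /\ (1 < r)%N /\ (1 <= m <= v)%N /\
    sumN2 v out.1 = sumN2 v y /\ two_level v m c out.1.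
Proof.
move=> c_gt0 c_lt1 hyc hY out.
have hsY : v%:R * c <= sumN2 v y.
  by rewrite -sumN2_const; apply: ler_sum_nat => i hi; apply: hyc; lia.
apply: proc_loop_stair => //; rewrite ?sumN2_const; try lra.
by move=> i /andP[_ hiv]; rewrite ltnNge hiv.
Qed.

Theorem lemma7 (R : realFieldType) (alpha : R) (v : nat) (y' w : nat -> R) :
  4 <= alpha ->
  (forall i : nat, (1 <= i <= v)%N -> (alpha - 1) / alpha <= y' i < 1) ->
  (forall i : nat, (1 <= i <= v)%N -> 0 <= w i) ->
  (forall i j : nat, (1 <= i)%N -> (i <= j)%N -> (j <= v)%N -> w i <= w j) ->
  sumN2 v y' <= v%:R - 1 ->
  let yh := (procedure alpha v y').1 in
  let stop := (procedure alpha v y').2 in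
  (exists r : nat, stop = Some r /\ (1 < r)%N) /\
  (forall i : nat, (1 <= i <= v)%N ->
     yh i = 1 \/ ((alpha - 2) / alpha < yh i /\ yh i <= (alpha - 1) / alpha)) /\
  (forall i : nat, (2 <= i <= v)%N -> yh i = (alpha - 1) / alpha \/ yh i = 1) /\
  sumN2 v yh = sumN2 v y' /\
  sumN2 v (fun i => (1 - yh i) * w i) <= sumN2 v (fun i => (1 - y' i) * w i).
Proof.
move=> ha hy _ hw hY yh stop; rewrite /yh /stop /procedure.
set c := (alpha - 1) / alpha.
have c_gt0 : 0 < c by rewrite divr_gt0; lra.
have c_lt1 : c < 1 by rewrite ltr_pdivrMr; lra.
have h2c : (alpha - 2) / alpha = 2 * c - 1.
  by rewrite /c; field; apply/negP => /eqP; lra.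
have hyc i : (1 <= i <= v)%N -> c <= y' i by move/hy/andP => [].
have [r [m [-> [hr [hm [hsum hz]]]]]] := proc_loop_const c_gt0 c_lt1 hyc hY.
set z := (proc_loop _ _ _ _).1 in hsum hz *.
split; first by exists r.
split.
  move=> i hi; have [hle hgt] := hz i hi.
  case: (leqP i m) => him; last by left; apply: hgt.
  by right; rewrite h2c; apply/andP; case: (hle him).
split.
  move=> i hi; have [hle hgt] := hz i ltac:(lia).
  case: (leqP i m) => him; last by right; apply: hgt.
  by left; apply: (hle him).2; case/andP: hi.
split=> //.
apply: (sumN2_weighted_deficit_le hm hsum _ _ hw) => i hi.
- have [/(_ ltac:(lia)) [/andP[_ hzc] _] _] := hz i ltac:(lia).
  by rewrite (le_trans hzc) ?hyc //; lia.
- have [_ ->] := hz i ltac:(lia); last by case/andP: hi.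
  by case/andP: (hy i ltac:(lia)) => _ /ltW.
Qed.
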